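(* Let $X$ be a locally compact (not necessarily abelian) group with neutral element $e$ such that for every open neighbourhood $U_e$ of $e$ there exists $x_*\in U_e$ such that the sequence $(x_*^n)_{n\in\mathbb{N}}$ is not contained in any compact subset of $X$. If a family $\mathcal{F}\subset C_0(X)$ is equicontinuous at every point and equivanishing, then it is pointwise bounded.
   Context: $C_0(X)$ is the space of continuous complex-valued functions on $X$ vanishing at infinity. $\mathcal{F}$ is pointwise bounded if for every $x\in X$ there is $M_x>0$ with $|f(x)|<M_x$ for all $f\in\mathcal{F}$; equicontinuous at every point if for every $x\in X$ and $\varepsilon>0$ there is an open neighbourhood $U$ of $x$ with $|f(y)-f(x)|<\varepsilon$ for all $y\in U$, $f\in\mathcal{F}$; equivanishing if for every $\varepsilon>0$ there is a compact $K\subset X$ with $\sup_{x\in X\setminus K}|f(x)|<\varepsilon$ for all $f\in\mathcal{F}$. *)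

From HB Require Import structures.
From mathcomp Require Import all_boot all_order all_algebra.
From mathcomp Require Import all_classical all_reals.
From mathcomp Require Import topology.
From mathcomp Require Import complex.
Set Implicit Arguments.
Unset Strict Implicit.
Unset Printing Implicit Defensive.
Import Order.TTheory GRing.Theory Num.Theory.
Local Open Scope ring_scope.
Local Open Scope classical_set_scope.

Definition cabs {R : realType} (z : R[i]) : R := ComplexField.Normc.normc z.

Section Defs.
Variables (R : realType) (X : topologicalType).

Definition is_topological_group (mul : X -> X -> X) (inv : X -> X) (e : X) :=
  [/\ (forall x y z, mul x (mul y z) = mul (mul x y) z),
      (forall x, mul e x = x /\ mul x e = x),
      (forall x, mul (inv x) x = e /\ mul x (inv x) = e),
      continuous (fun p : X * X => mul p.1 p.2)
    & continuous inv].

Definition gpow (mul : X -> X -> X) (e : X) (x : X) (n : nat) : X :=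
  iter n (mul x) e.

Definition cont_C (f : X -> R[i]) :=
  forall x (eps : R), 0 < eps ->
    exists U : set X, [/\ open U, U x &
      forall y, U y -> cabs (f y - f x) < eps].

Definition vanishes_at_infinity (f : X -> R[i]) :=
  forall eps : R, 0 < eps ->
    exists K : set X, compact K /\ forall x, ~ K x -> cabs (f x) < eps.

Definition C0 : set (X -> R[i]) :=
  [set f | cont_C f /\ vanishes_at_infinity f].

Definition pointwise_bounded (F : set (X -> R[i])) :=
  forall x, exists M : R, 0 < M /\ forall f, F f -> cabs (f x) < M.

Definition equicontinuous_everywhere (F : set (X -> R[i])) :=
  forall x (eps : R), 0 < eps ->
    exists U : set X, [/\ open U, U x &
      forall y f, U y -> F f -> cabs (f y - f x) < eps].

Definition equivanishing (F : set (X -> R[i])) :=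
  forall eps : R, 0 < eps ->
    exists K : set X, compact K /\
      forall f, F f -> forall x, ~ K x -> cabs (f x) < eps.
End Defs.

From HB Require Import structures.
From mathcomp Require Import all_boot all_order all_algebra.
From mathcomp Require Import all_classical all_reals.
From mathcomp Require Import topology.
From mathcomp Require Import complex.
Import Order.TTheory GRing.Theory Num.Theory.
Local Open Scope ring_scope.
Local Open Scope classical_set_scope.

(* Equicontinuity makes boundedness of F at a point locally constant, so the
   set C of points where F is unbounded is open; equivanishing puts C inside
   a compact set, and C is closed, hence compact.  If C contained a point x,
   compactness and openness of C would give a neighbourhood U of e with
   U C ⊆ C; then for x_* ∈ U every x_*^n x lies in C, i.e. all powers of x_*
   lie in the compact set C x^-1, contradicting the hypothesis on X. *)

Lemma cabs_le_addB {R : realType} (a b : R[i]) : cabs a <= cabs b + cabs (a - b).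
Proof. by have := @le_normcD R b (a - b); rewrite addrC subrK. Qed.

Lemma cabsB {R : realType} (a b : R[i]) : cabs (a - b) = cabs (b - a).
Proof. by rewrite -opprB /cabs normcN. Qed.

Definition bounded_at {R : realType} {X : topologicalType}
  (F : set (X -> R[i])) : set X :=
  [set y | exists M : R, forall f, F f -> cabs (f y) < M].

Lemma bounded_at_pointwise_bounded {R : realType} {X : topologicalType}
  (F : set (X -> R[i])) : bounded_at F = setT -> pointwise_bounded F.
Proof.
move=> BT x; have [M HM] : bounded_at F x by rewrite BT.
exists (`|M| + 1); split; first by rewrite ltr_wpDl.
move=> f Ff; apply: (lt_le_trans (HM f Ff)).
by rewrite (le_trans (ler_norm M)) // lerDl.
Qed.

Section Equicontinuous.
Context {R : realType} {X : topologicalType} {F : set (X -> R[i])}.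
Hypothesis Feq : equicontinuous_everywhere F.

Lemma bounded_at_locally_constant (y : X) :
  \forall z \near y, bounded_at F z <-> bounded_at F y.
Proof.
have [U [oU Uy HU]] := Feq y 1 ltr01.
apply: filterS (open_nbhs_nbhs (conj oU Uy)) => z Uz.
split=> -[M HM]; exists (M + 1) => f Ff.
- by rewrite (le_lt_trans (cabs_le_addB (f y) (f z))) // cabsB ltrD ?HU ?HM.
- by rewrite (le_lt_trans (cabs_le_addB (f z) (f y))) // ltrD ?HU ?HM.
Qed.

Lemma open_bounded_at : open (bounded_at F).
Proof.
rewrite openE => y By.
by apply: filterS (bounded_at_locally_constant y) => z [_]; apply.
Qed.

Lemma open_unbounded_at : open (~` bounded_at F).
Proof.
rewrite openE => y nBy.
by apply: filterS (bounded_at_locally_constant y) => z [zy _] /zy.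
Qed.

Hypothesis Fvan : equivanishing F.

Lemma compact_unbounded_at : compact (~` bounded_at F).
Proof.
have [K [cK HK]] := Fvan 1 ltr01.
apply: (subclosed_compact (open_closedC open_bounded_at) cK) => y nBy.
by apply: contrapT => Ky; apply: nBy; exists 1 => f Ff; exact: HK.
Qed.

End Equicontinuous.

Section Translations.
Context {X : topologicalType} {mul : X -> X -> X} {e : X}.
Hypothesis mul_cont : continuous (fun p : X * X => mul p.1 p.2).
Hypothesis mul1x : forall x, mul e x = x.
Hypothesis mulA : forall x y z, mul x (mul y z) = mul (mul x y) z.

Lemma compact_mulr_image (a : X) (C : set X) :
  compact C -> compact (mul^~ a @` C).
Proof.
move=> cC; apply: continuous_compact => //; apply: continuous_subspaceT => y.
apply: (continuous2_cvg (h := mul) _ _ _ _) => //.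
  exact: (mul_cont (y, a)).
exact: cvg_cst.
Qed.

(* The tube lemma for the map (v, c) |-> v c, which sends {e} x C into C. *)
Lemma near_mull_stable (C : set X) : compact C -> open C ->
  nbhs e [set v | C `<=` [set c | C (mul v c)]].
Proof.
move=> cC oC.
apply: ((compact_near_coveringP C).1 cC X (nbhs e) (fun v c => C (mul v c)))
  => c Cc.
have : nbhs (e, c) [set p | C (mul p.1 p.2)].
  by apply: mul_cont; rewrite /= mul1x; exact: open_nbhs_nbhs.
case=> -[A1 A2] /= [nA1 nA2] sub.
by exists (A2, A1) => //= -[c' v] /= [A2c A1v]; exact: (sub (v, c')).
Qed.

Lemma gpow_mull_stable (C : set X) (v x : X) :
  C `<=` [set c | C (mul v c)] -> C x -> forall n, C (mul (gpow mul e v n) x).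
Proof.
move=> vC Cx; elim=> [|n IH] /=; first by rewrite mul1x.
by rewrite -mulA; exact: vC.
Qed.

End Translations.

Theorem theorem4p7 (R : realType) (X : topologicalType)
  (mul : X -> X -> X) (inv : X -> X) (e : X) :
  is_topological_group mul inv e ->
  hausdorff_space X ->
  locally_compact [set: X] ->
  (forall U : set X, open U -> U e ->
     exists2 xs : X, U xs &
       ~ (exists K : set X, compact K /\ forall n : nat, K (gpow mul e xs n))) ->
  forall F : set (X -> R[i]),
    F `<=` @C0 R X ->
    equicontinuous_everywhere F ->
    equivanishing F ->
    pointwise_bounded F.
Proof.
move=> [mulA mulid mulV mul_cont _] _ _ unbounded_powers F _ Feq Fvan.
apply: bounded_at_pointwise_bounded; apply/seteqP; split=> // x _.
apply: contrapT => unbounded_x.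
set C := ~` bounded_at F.
have mul1x x' : mul e x' = x' by case: (mulid x').
have cC : compact C := compact_unbounded_at Feq Fvan.
have := near_mull_stable mul_cont mul1x C cC (open_unbounded_at Feq).
rewrite nbhsE => -[U [oU Ue] UC].
have [v Uv] := unbounded_powers U oU Ue; apply.
exists (mul^~ (inv x) @` C); split.
  exact: compact_mulr_image mul_cont _ _ cC.
move=> n; exists (mul (gpow mul e v n) x).
  exact: (gpow_mull_stable mul1x mulA C v x (UC v Uv) unbounded_x n).
by rewrite -mulA (proj2 (mulV x)) (proj2 (mulid _)).
Qed.
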